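(* Let $B$ be a $d\times d$ integral matrix with $|\det(B)|=2$. Then there exist natural numbers $p\le d$, $n_0$, $m_0$ and a row vector $\vec r=[r_1,\dots,r_{p-1},0,\dots,0]$ with $r_j\in\{0,1\}$ such that $$B=L^{(p)}_{\vec r}D_pV,\qquad B=I_{pd}M^{(p)}_{\vec r}D_dU,\qquad B=V_1V_2\cdots V_{n_0}D_dU_1U_2\cdots U_{m_0},$$ where $V,U\in\mathfrak M$ and $V_j,U_i\in\mathfrak G$.
   Context: $I$ is the $d\times d$ identity; $\Delta_{ij}$ is the $d\times d$ matrix with $1$ in position $(i,j)$ and $0$ elsewhere; $I_{ij}$ is the matrix obtained from $I$ by interchanging columns $i$ and $j$ (so $I_{ii}=I$); $D_p=I+\Delta_{pp}$; $S_p=I-2\Delta_{pp}$. $\mathfrak M$ is the group of $d\times d$ integral matrices with determinant $\pm1$, and $\mathfrak G=\{S_p\}\cup\{I\pm\Delta_{ij}:i\ne j\}\cup\{I_{ij}\}$ (elementary matrices). For $\vec r=[r_1,\dots,r_{p-1},0,\dots,0]$: $L^{(p)}_{\vec r}=I+\sum_{j=1}^{p-1}r_j\Delta_{pj}$ and $M^{(p)}_{\vec r}=I+\sum_{j=1}^{p-1}r_j\Delta_{dj}$. *)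

From HB Require Import structures.
From mathcomp Require Import all_boot all_order all_algebra.
Set Implicit Arguments. Unset Strict Implicit. Unset Printing Implicit Defensive.
Import Order.TTheory GRing.Theory Num.Theory.
Local Open Scope ring_scope.

(* Indices are 0-based: the paper's index k (1 <= k <= d) is the ordinal k-1 : 'I_d. *)

Lemma ord_last_proof {d : nat} (i : 'I_d) : (d.-1 < d)%N.
Proof. by rewrite ltn_predL (leq_ltn_trans (leq0n i) (ltn_ord i)). Qed.

(* the last index d (0-based: d-1), built from any inhabitant of 'I_d *)
Definition ord_last {d : nat} (i : 'I_d) : 'I_d := Ordinal (ord_last_proof i).

Definition Delta {d : nat} (i j : 'I_d) : 'M[int]_d := delta_mx i j.
Definition Iswap {d : nat} (i j : 'I_d) : 'M[int]_d := xcol i j 1%:M.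
Definition Dmx {d : nat} (p : 'I_d) : 'M[int]_d := 1%:M + Delta p p.
Definition Smx {d : nat} (p : 'I_d) : 'M[int]_d := 1%:M - 2%:R *: Delta p p.

Definition Lmx {d : nat} (p : 'I_d) (r : 'I_d -> int) : 'M[int]_d :=
  1%:M + \sum_(j < d | (j < p)%N) r j *: Delta p j.
Definition Mmx {d : nat} (p : 'I_d) (r : 'I_d -> int) : 'M[int]_d :=
  1%:M + \sum_(j < d | (j < p)%N) r j *: Delta (ord_last p) j.

Definition inMfrak {d : nat} (A : 'M[int]_d) : Prop := \det A = 1 \/ \det A = -1.

Definition inGfrak {d : nat} (A : 'M[int]_d) : Prop :=
  (exists p : 'I_d, A = Smx p)
  \/ (exists i j : 'I_d, i != j /\ (A = 1%:M + Delta i j \/ A = 1%:M - Delta i j))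
  \/ (exists i j : 'I_d, A = Iswap i j).

Definition mxprod {d n : nat} (A : 'I_n -> 'M[int]_d) : 'M[int]_d :=
  \big[mulmx/1%:M]_(i < n) A i.

From HB Require Import structures.
From mathcomp Require Import all_boot all_order all_algebra.
From mathcomp Require Import perm ring zify.
Import Order.TTheory GRing.Theory Num.Theory.
Local Open Scope ring_scope.

Set Implicit Arguments.
Unset Strict Implicit.

(** Row by row, Euclid's algorithm on the entries right of the
  diagonal (transvections, then a swap and a sign change; it terminates
  because [tail_weight] drops), followed by reduction of the entries left of
  the pivot modulo the pivot, brings any [B] to a lower triangular Hermite
  form [B Q], with [Q] a product of elementary matrices. When [|det B| = 2]
  the nonnegative diagonal of [B Q] has product 2, so it is 1 except for a
  single 2 at some [p]; the reduced entries then vanish except in row [p] left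
  of the diagonal, where they lie in {0, 1}: this is [B Q = L^(p)_r D_p].
  Since [Q^-1] is again a product of elementary matrices, and conjugation by
  the involution [I_pd] maps [L^(p)_r] to [M^(p)_r] and [D_p] to [D_d], all
  three factorizations follow. *)

Lemma tperm_eqR (T : finType) (x y z : T) : (tperm x y z == y) = (z == x).
Proof. by rewrite -[X in _ == X](tpermL x y) (inj_eq perm_inj). Qed.

Section ElementaryMatrices.

Variable d : nat.
Implicit Types (A : 'M[int]_d) (i j a b p : 'I_d) (r : 'I_d -> int).

Definition addcols_mx i (P : pred 'I_d) (c : 'I_d -> int) : 'M[int]_d :=
  1%:M + \sum_(l | P l) c l *: delta_mx i l.

Lemma mul_delta_mxE A i j a b : (A *m delta_mx i j) a b = A a i * (b == j)%:R.
Proof.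
by rewrite mxE (bigD1 i) //= big1 ?addr0 => [|l /negPf li]; rewrite mxE ?li ?eqxx ?mulr0.
Qed.

Lemma mul_addcols_mxE A i P c a b :
  (A *m addcols_mx i P c) a b = A a b + (P b)%:R * c b * A a i.
Proof.
have scaleE l : (A *m (c l *: delta_mx i l)) a b = c l * (A a i * (b == l)%:R).
  by rewrite -scalemxAr [LHS]mxE mul_delta_mxE.
rewrite mulmxDr mulmx1 mulmx_sumr mxE summxE; congr (_ + _).
rewrite big_mkcond (bigD1 b) //= big1 ?addr0 => [|l /negPf lb].
  by case: (P b); rewrite /= ?mul0r // scaleE eqxx mulr1 mul1r mulrC.
by case: (P l); rewrite // scaleE eq_sym lb !mulr0.
Qed.

Lemma addcols_mxE i P c a b :
  addcols_mx i P c a b = (a == b)%:R + (P b)%:R * c b * (a == i)%:R.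
Proof. by rewrite -[addcols_mx i P c]mul1mx mul_addcols_mxE !mxE. Qed.

Lemma addcols_mx1 i j (x : int) :
  addcols_mx i (pred1 j) (fun=> x) = 1%:M + x *: delta_mx i j.
Proof. by rewrite /addcols_mx big_pred1_eq. Qed.

Lemma LmxE p r : Lmx p r = addcols_mx p (fun j => (j < p)%N) r.
Proof. by []. Qed.

Lemma MmxE p r : Mmx p r = addcols_mx (ord_last p) (fun j => (j < p)%N) r.
Proof. by []. Qed.

Lemma DmxE p : Dmx p = addcols_mx p (pred1 p) (fun=> 1).
Proof. by rewrite addcols_mx1 scale1r. Qed.

Lemma SmxE p : Smx p = addcols_mx p (pred1 p) (fun=> -2).
Proof. by rewrite addcols_mx1 /Smx /Delta scaleNr. Qed.

Lemma mul_transvection_mxE A i j (x : int) a b :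
  (A *m (1%:M + x *: delta_mx i j)) a b = A a b + (b == j)%:R * x * A a i.
Proof. by rewrite -addcols_mx1 mul_addcols_mxE. Qed.

Lemma transvection_mxM i j (x y : int) :
  (1%:M + x *: delta_mx i j) *m (1%:M + y *: delta_mx i j)
  = 1%:M + (x + y + x * y * (j == i)%:R) *: delta_mx i j :> 'M[int]_d.
Proof.
rewrite mulmxDr mulmx1 !mulmxDl !mul1mx -scalemxAl -scalemxAr mul_delta_mx_cond.
by rewrite -scaler_nat !scalerA -addrA -!scalerDl; congr (_ + _ *: _); ring.
Qed.

Lemma mul_IswapE A i j a b : (A *m Iswap i j) a b = A a (tperm i j b).
Proof. by rewrite /Iswap xcolE mul1mx -xcolE mxE. Qed.

Lemma Iswap_mulE A i j a b : (Iswap i j *m A) a b = A (tperm i j a) b.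
Proof. by rewrite /Iswap xcolE mul1mx -xrowE mxE. Qed.

Lemma Iswap_conjE A i j a b :
  (Iswap i j *m A *m Iswap i j) a b = A (tperm i j a) (tperm i j b).
Proof. by rewrite mul_IswapE Iswap_mulE. Qed.

Lemma Iswap_invol i j : Iswap i j *m Iswap i j = 1%:M.
Proof. by rewrite /Iswap xcolE mul1mx -perm_mxM tperm2 perm_mx1. Qed.

Lemma Iswap_conj_Dmx i j : Iswap i j *m Dmx j *m Iswap i j = Dmx i.
Proof.
by apply/matrixP => a b; rewrite Iswap_conjE !DmxE !addcols_mxE /= (inj_eq perm_inj) !tperm_eqR.
Qed.

Lemma Iswap_conj_addcols i j P c : ~~ P i -> ~~ P j ->
  Iswap i j *m addcols_mx j P c *m Iswap i j = addcols_mx i P c.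
Proof.
move=> /negPf Pi /negPf Pj; apply/matrixP => a b.
rewrite Iswap_conjE !addcols_mxE (inj_eq perm_inj) tperm_eqR.
by case: tpermP => [->|->|//]; rewrite ?Pi ?Pj !mul0r.
Qed.

End ElementaryMatrices.

Section GeneratedGroup.

Variable d : nat.
Implicit Types (M Q : 'M[int]_d) (s : seq 'M[int]_d) (i j : 'I_d).

Definition prodmx s : 'M[int]_d := foldr mulmx 1%:M s.

Definition Gfrak_prod Q := exists2 s, {in s, forall M, inGfrak M} & Q = prodmx s.

Lemma prodmx_cat s1 s2 : prodmx (s1 ++ s2) = prodmx s1 *m prodmx s2.
Proof. by elim: s1 => [|M s IHs] /=; rewrite ?mul1mx // IHs mulmxA. Qed.

Lemma Gfrak_prod1 : Gfrak_prod 1%:M.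
Proof. by exists [::]. Qed.

Lemma Gfrak_prod_gen M : inGfrak M -> Gfrak_prod M.
Proof. by exists [:: M]; [move=> N /[1!inE] /eqP-> | rewrite /= mulmx1]. Qed.

Lemma Gfrak_prodM Q1 Q2 : Gfrak_prod Q1 -> Gfrak_prod Q2 -> Gfrak_prod (Q1 *m Q2).
Proof.
move=> [s1 G1 ->] [s2 G2 ->]; exists (s1 ++ s2); last by rewrite prodmx_cat.
by move=> M /[1!mem_cat] /orP[/G1|/G2].
Qed.

Lemma Gfrak_prod_mxprod Q : Gfrak_prod Q ->
  exists n (Qs : 'I_n -> 'M[int]_d), (forall t, inGfrak (Qs t)) /\ Q = mxprod Qs.
Proof.
move=> [s Gs ->]; exists (size s), (fun t => nth 1%:M s t); split.
  by move=> t; apply/Gs/mem_nth.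
rewrite /mxprod; elim: s {Gs} => [|M s IHs] /=; first by rewrite big_ord0.
by rewrite big_ord_recl IHs.
Qed.

Lemma inGfrak_inv M : inGfrak M -> exists2 M', inGfrak M' & M *m M' = 1%:M.
Proof.
have transvectionK i j (x y : int) : i != j -> x + y = 0 ->
    (1%:M + x *: delta_mx i j) *m (1%:M + y *: delta_mx i j) = 1%:M.
  by move=> ij xy; rewrite transvection_mxM eq_sym (negPf ij) mulr0 addr0 xy scale0r addr0.
case=> [[p ->]|[[i [j [ij [->|->]]]]|[i [j ->]]]].
- exists (Smx p); first by left; exists p.
  rewrite SmxE addcols_mx1 transvection_mxM eqxx.
  by have -> : -2 - 2 + -2 * -2 * true%:R = 0 :> int by []; rewrite scale0r addr0.
- exists (1%:M - Delta i j); first by right; left; exists i, j; split; [|right].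
  by rewrite /Delta -[delta_mx i j]scale1r -scaleNr transvectionK ?subrr.
- exists (1%:M + Delta i j); first by right; left; exists i, j; split; [|left].
  by rewrite /Delta -[delta_mx i j]scale1r -scaleNr transvectionK ?addNr.
- by exists (Iswap i j); [right; right; exists i, j | exact: Iswap_invol].
Qed.

Lemma Gfrak_prod_inv Q : Gfrak_prod Q -> exists2 Q', Gfrak_prod Q' & Q *m Q' = 1%:M.
Proof.
move=> [s]; elim: s Q => [|M s IHs] Q Gs -> /=.
  by exists 1%:M; [exact: Gfrak_prod1 | rewrite mulmx1].
have [M' GM' MM'] := inGfrak_inv (Gs M (mem_head _ _)).
have Gs' : {in s, forall N, inGfrak N} by move=> N sN; apply: Gs; rewrite inE sN orbT.
have [Q' GQ' QQ'] := IHs _ Gs' erefl.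
exists (Q' *m M'); first by apply: Gfrak_prodM => //; exact: Gfrak_prod_gen.
by rewrite mulmxA -(mulmxA M) QQ' mulmx1.
Qed.

Lemma Gfrak_prod_det Q : Gfrak_prod Q -> inMfrak Q.
Proof.
move=> /Gfrak_prod_inv[Q' _ QQ'].
have : \det Q \is a GRing.unit by apply/unitrPr; exists (\det Q'); rewrite -det_mulmx QQ' det1.
by move=> /orP[] /eqP; [left | right].
Qed.

Lemma Gfrak_prod_transvection i j (x : int) : i != j ->
  Gfrak_prod (1%:M + x *: delta_mx i j).
Proof.
move=> ij; have addE (y z : int) : 1%:M + (y + z) *: delta_mx i j
    = (1%:M + y *: delta_mx i j) *m (1%:M + z *: delta_mx i j).
  by rewrite transvection_mxM eq_sym (negPf ij) mulr0 addr0.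
have Gfrak_unit (e : int) : e = 1 \/ e = -1 -> Gfrak_prod (1%:M + e *: delta_mx i j).
  by move=> e1; apply: Gfrak_prod_gen; right; left; exists i, j; case: e1 => ->;
     rewrite ?scaleN1r ?scale1r; auto.
elim/int_rect: x => [|n IHn|n IHn]; first by rewrite scale0r addr0; exact: Gfrak_prod1.
  by rewrite intS addE; apply: Gfrak_prodM => //; apply: Gfrak_unit; left.
by rewrite intS opprD addE; apply: Gfrak_prodM => //; apply: Gfrak_unit; right.
Qed.

Lemma Gfrak_prod_addcols i P c : ~~ P i -> Gfrak_prod (addcols_mx i P c).
Proof.
move=> /negPf Pi; rewrite /addcols_mx.
pose Inv (X : 'M[int]_d) := Gfrak_prod (1%:M + X) /\ forall l : 'I_d, X *m delta_mx i l = 0.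
suff [] : Inv (\sum_(l | P l) c l *: delta_mx i l) by [].
apply: big_rec => [|l X Pl [GX Xi]].
  by split=> [|l]; rewrite ?addr0 ?mul0mx //; exact: Gfrak_prod1.
have li : l != i by apply: contraTneq Pl => ->; rewrite Pi.
split=> [|l']; last by rewrite mulmxDl Xi -scalemxAl mul_delta_mx_0 ?scaler0 ?addr0.
have -> : 1%:M + (c l *: delta_mx i l + X) = (1%:M + X) *m (1%:M + c l *: delta_mx i l).
  by rewrite mulmxDr mulmx1 mulmxDl mul1mx -scalemxAr Xi scaler0 addr0 addrAC addrA.
by apply: Gfrak_prodM => //; apply: Gfrak_prod_transvection; rewrite eq_sym.
Qed.

End GeneratedGroup.

Section ColumnReduction.

Variable d : nat.
Implicit Types (A H Q : 'M[int]_d) (a b i j k l m : 'I_d).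

Definition fixes_first (n : nat) Q := forall a b, (a < n)%N -> Q a b = (a == b)%:R.

Definition upper_zero (n : nat) A := forall m l, (m < n)%N -> (n <= l)%N -> A m l = 0.

Lemma fixes_firstM n Q1 Q2 :
  fixes_first n Q1 -> fixes_first n Q2 -> fixes_first n (Q1 *m Q2).
Proof.
move=> F1 F2 a b an; transitivity ((1%:M *m Q2) a b); last by rewrite mul1mx F2.
by rewrite !mxE; apply: eq_bigr => j _; rewrite F1 // mxE.
Qed.

Lemma fixes_first_addcols (n : nat) i P c : (n <= i)%N -> fixes_first n (addcols_mx i P c).
Proof.
move=> ni a b an; rewrite addcols_mxE.
have /negPf-> : a != i by apply: contraTneq an => ->; rewrite -leqNgt.
by rewrite mulr0 addr0.
Qed.

Lemma fixes_first_Iswap k i : (k <= i)%N -> fixes_first k (Iswap k i).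
Proof.
move=> ki a b ak; rewrite -[Iswap k i]mul1mx mul_IswapE mxE.
have ka : k != a by apply: contraTneq ak => ->; rewrite ltnn.
have ia : i != a by apply: contraTneq ak => <-; rewrite -leqNgt.
by rewrite -{1}(tpermD ka ia) (inj_eq perm_inj).
Qed.

Lemma mulmx_fixes_first_row n A Q m l :
  fixes_first n Q -> upper_zero n A -> (m < n)%N -> (A *m Q) m l = A m l.
Proof.
move=> FQ UA mn; rewrite -[in RHS](mulmx1 A) !mxE; apply: eq_bigr => j _.
by case: (ltnP j n) => jn; [rewrite FQ // mxE | rewrite UA // !mul0r].
Qed.

Definition tail_weight k A := (\sum_(l : 'I_d | (k <= l)%N) `|A k l|)%N.

Definition pivoted k A := (forall l, (k < l)%N -> A k l = 0) /\ 0 <= A k k.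

Definition pivotable k A :=
  exists2 Q, Gfrak_prod Q /\ fixes_first k Q & pivoted k (A *m Q).

Lemma pivotable_mul k A Q :
  Gfrak_prod Q -> fixes_first k Q -> pivotable k (A *m Q) -> pivotable k A.
Proof.
move=> GQ FQ [Q' [GQ' FQ'] pivQ']; exists (Q *m Q'); last by rewrite mulmxA.
by split; [exact: Gfrak_prodM | exact: fixes_firstM].
Qed.

Lemma pivotable_sign k A : (forall l, (k < l)%N -> A k l = 0) -> pivotable k A.
Proof.
move=> tail0; have [Akk_ge0 | Akk_lt0] := lerP 0 (A k k).
  exists 1%:M; last by rewrite mulmx1.
  by split=> [|a b _]; [exact: Gfrak_prod1 | rewrite mxE].
exists (Smx k).
  by split; [apply: Gfrak_prod_gen; left; exists k | rewrite SmxE; exact: fixes_first_addcols].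
rewrite SmxE; split=> [l kl|]; rewrite mul_addcols_mxE /=.
  by case: eqP => [lk|_]; [move: kl; rewrite lk ltnn | rewrite tail0 // mul0r addr0].
rewrite eqxx; lia.
Qed.

Lemma pivotable_swap k i A :
  (k <= i)%N -> (forall l, (k <= l)%N -> l != i -> A k l = 0) -> pivotable k A.
Proof.
move=> ki Ai; apply: (pivotable_mul (Q := Iswap k i)).
- by apply: Gfrak_prod_gen; right; right; exists k, i.
- exact: fixes_first_Iswap.
apply: pivotable_sign => l kl; rewrite mul_IswapE.
case: tpermP => [lk|li|_ li]; first by move: kl; rewrite lk ltnn.
  by apply: Ai => //; apply: contraTneq kl => ->; rewrite li ltnn.
by apply: Ai; [exact: ltnW | apply/eqP].
Qed.

Lemma row_tail_cases k A :
  (exists i j : 'I_d, [/\ (k <= i)%N, (k <= j)%N, i != j, A k i != 0 & (`|A k i| <= `|A k j|)%N])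
  \/ exists2 i : 'I_d, (k <= i)%N & forall l, (k <= l)%N -> l != i -> A k l = 0.
Proof.
case: (boolP [exists i : 'I_d, exists j : 'I_d,
    [&& (k <= i)%N, (k <= j)%N, i != j, A k i != 0 & A k j != 0]]).
  move=> /existsP[i /existsP[j /and5P[ki kj ij Ai Aj]]]; left.
  have [le | lt] := leqP `|A k i| `|A k j|; first by exists i, j.
  by exists j, i; split=> //; [rewrite eq_sym | exact: ltnW].
move=> /existsPn none; right.
case: (boolP [exists i : 'I_d, (k <= i)%N && (A k i != 0)]) => [/existsP[i /andP[ki Ai]]|/existsPn zero].
  exists i => // l kl li; apply/eqP; move: (none i) => /existsPn/(_ l).
  by rewrite ki kl eq_sym li Ai /= => /negPn.
by exists k => // l kl _; apply/eqP; move: (zero l); rewrite kl /= => /negPn.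
Qed.

Lemma absz_sub_sgz_lt (x y : int) :
  y != 0 -> (`|y| <= `|x|)%N -> (`|(x - sgz x * sgz y * y)%R| < `|x|)%N.
Proof.
move=> y0 le; rewrite -mulrA -abszEsg.
case: (ltrgtP x 0) => [x_lt0|x_gt0|x0]; first (by rewrite ltr0_sgz //; lia);
  first by rewrite gtr0_sgz //; lia.
by move: le y0; rewrite x0 leqn0 absz_eq0 => /eqP->.
Qed.

Lemma tail_weight_transvection k i j A :
  i != j -> (k <= j)%N -> A k i != 0 -> (`|A k i| <= `|A k j|)%N ->
  (tail_weight k (A *m (1%:M + (- (sgz (A k j) * sgz (A k i))) *: delta_mx i j))
   < tail_weight k A)%N.
Proof.
move=> ij kj Ai le; rewrite /tail_weight !(bigD1 j kj) /=.
under eq_bigr => l /andP[_ /negPf lj] do rewrite mul_transvection_mxE lj !mul0r addr0.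
by rewrite ltn_add2r mul_transvection_mxE eqxx mul1r mulNr; exact: absz_sub_sgz_lt.
Qed.

Lemma pivotable_all k A : pivotable k A.
Proof.
have [n] := ubnP (tail_weight k A); elim: n A => // n IHn A weight_lt.
case: (row_tail_cases k A) => [[i [j [ki kj ij Ai le]]]|[i ki Ai]]; last first.
  exact: pivotable_swap Ai.
apply: (pivotable_mul (Q := 1%:M + (- (sgz (A k j) * sgz (A k i))) *: delta_mx i j)).
- exact: Gfrak_prod_transvection.
- by rewrite -addcols_mx1; exact: fixes_first_addcols.
apply: IHn; rewrite -ltnS (leq_trans _ weight_lt) // ltnS.
exact: tail_weight_transvection.
Qed.

Lemma reduce_row_head k A : (forall m, (m < k)%N -> A m k = 0) ->
  exists2 Q, Gfrak_prod Q &
  [/\ forall m l, (m < k)%N -> (A *m Q) m l = A m l,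
      forall m l, (k <= l)%N -> (A *m Q) m l = A m l &
      forall l, (l < k)%N -> 0 < A k k -> 0 <= (A *m Q) k l < A k k].
Proof.
move=> col0; pose c l : int := - (A k l %/ A k k)%Z.
exists (addcols_mx k (fun l => (l < k)%N) c); first by apply: Gfrak_prod_addcols; rewrite ltnn.
split=> [m l mk|m l kl|l lk Akk_gt0]; rewrite mul_addcols_mxE.
- by rewrite col0 // mulr0 addr0.
- by rewrite ltnNge kl /= !mul0r addr0.
have -> : A k l + (l < k)%N%:R * c l * A k k = (A k l %% A k k)%Z by rewrite lk mul1r mulNr.
by rewrite modz_ge0 ?gt_eqF // ltz_pmod.
Qed.

Definition hnf_rows (n : nat) H := forall m l, (m < n)%N ->
  [/\ (m < l)%N -> H m l = 0, 0 <= H m m & (l < m)%N -> 0 < H m m -> 0 <= H m l < H m m].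

Lemma hnf_rows_exists n A : (n <= d)%N -> exists2 Q, Gfrak_prod Q & hnf_rows n (A *m Q).
Proof.
elim: n => [|n IHn] nd; first by exists 1%:M; [exact: Gfrak_prod1 | move=> m l].
have [Q0 GQ0 hnfH] := IHn (ltnW nd); set H := A *m Q0 in hnfH.
pose k : 'I_d := Ordinal nd.
have Hup : upper_zero k H.
  by move=> m l mk kl; case: (hnfH m l mk) => + _ _; apply; exact: leq_trans kl.
have [Q1 [GQ1 FQ1] [tail0 pivot_ge0]] := pivotable_all k H.
set H1 := H *m Q1 in tail0 pivot_ge0.
have H1rows m l : (m < k)%N -> H1 m l = H m l by exact: mulmx_fixes_first_row.
have H1col m : (m < k)%N -> H1 m k = 0 by move=> mk; rewrite H1rows // Hup.
have [Q2 GQ2 [rows_eq cols_eq head]] := reduce_row_head H1col.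
exists (Q0 *m Q1 *m Q2); first by do 2?apply: Gfrak_prodM.
rewrite !mulmxA -/H -/H1 => m l; rewrite ltnS leq_eqVlt => /orP[/eqP mk|mk].
  have -> : m = k by exact: val_inj.
  by split=> [kl | | lk]; rewrite cols_eq ?leqnn //; [exact: tail0 | exact: ltnW | exact: head].
by rewrite !rows_eq // !H1rows //; exact: hnfH.
Qed.

End ColumnReduction.

Lemma ge0_mulz_eq2 (x y : int) : 0 <= x -> 0 <= y -> x * y = 2 -> x = 1 \/ x = 2.
Proof.
move=> x_ge0 y_ge0 xy2; have y_ge1 : 1 <= y by nia.
have : x <= 2 by nia.
lia.
Qed.

Section DeterminantTwo.

Variable d : nat.
Implicit Types (H : 'M[int]_d) (a b i j p : 'I_d).

Lemma prod_ge0_eq2 (D : 'I_d -> int) :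
  (forall i, 0 <= D i) -> \prod_i D i = 2 -> exists2 p, D p = 2 & forall j, j != p -> D j = 1.
Proof.
move=> D_ge0 prodD.
have D12 i : D i = 1 \/ D i = 2.
  move: prodD; rewrite (bigD1 i) //=; apply: ge0_mulz_eq2 => //.
  exact: prodr_ge0.
have [p Dp1] : exists p, D p != 1.
  apply/existsP; apply: contraT => /existsPn D1; move: prodD.
  by rewrite big1 // => i _; apply/eqP; rewrite -[_ == _]negbK D1.
have Dp : D p = 2 by case: (D12 p) Dp1 => ->.
exists p => // j jp; case: (D12 j) => // Dj; move: prodD.
rewrite (bigD1 p) //= (bigD1 j) ?jp //= Dp Dj; set rest := \prod_(i | _) _.
have : 0 <= rest by apply: prodr_ge0.
lia.
Qed.

Lemma hnf_det2_LmxDmx H : hnf_rows d H -> `|\det H| = 2 ->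
  exists p r, [/\ forall j, r j = 0 \/ r j = 1, forall j, (p <= j)%N -> r j = 0
                & H = Lmx p r *m Dmx p].
Proof.
move=> hnfH detH.
have upper0 a b : (a < b)%N -> H a b = 0 by case: (hnfH a b (ltn_ord a)) => + _ _; apply.
have diag_ge0 i : 0 <= H i i by case: (hnfH i i (ltn_ord i)).
have [p Hpp Hjj] : exists2 p, H p p = 2 & forall j, j != p -> H j j = 1.
  have trigH : is_trig_mx H by apply/is_trig_mxP.
  apply: prod_ge0_eq2 => //; rewrite -det_trig // -detH ger0_norm // det_trig //.
  exact: prodr_ge0.
have lower a b : (b < a)%N -> 0 <= H a b < H a a.
  move=> ba; case: (hnfH a b (ltn_ord a)) => _ _; apply => //.
  by case: (eqVneq a p) => [->|/Hjj->]; rewrite ?Hpp.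
pose r j : int := if (j < p)%N then H p j else 0.
exists p, r; split.
- move=> j; rewrite /r; case: ifP => jp; last by left.
  by have := lower p j jp; rewrite Hpp; lia.
- by move=> j; rewrite /r ltnNge => ->.
apply/matrixP => a b; rewrite DmxE mul_addcols_mxE LmxE !addcols_mxE ltnn /= -!val_eqE /=.
case: (eqVneq a p) => [-> {a}|ap].
  rewrite eqxx /r; case: (ltngtP b p) => [bp|pb|/val_inj->].
  - by rewrite /=; ring.
  - by rewrite upper0 //=; ring.
  - by rewrite Hpp /=; ring.
have -> : (a == p :> nat) = false by apply/negbTE.
case: (ltngtP a b) => [ab|ba|/val_inj<-].
- by rewrite upper0 //=; ring.
- have -> : H a b = 0 by have := lower a b ba; rewrite Hjj //; lia.
  by rewrite /=; ring.
- by rewrite Hjj //=; ring.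
Qed.

End DeterminantTwo.

Theorem proposition3p4 (d : nat) (B : 'M[int]_d) :
  `|\det B| = 2 ->
  exists (p : 'I_d) (n0 m0 : nat) (r : 'I_d -> int),
    (forall j : 'I_d, r j = 0 \/ r j = 1) /\
    (forall j : 'I_d, (p <= j)%N -> r j = 0) /\
    (exists V : 'M[int]_d, inMfrak V /\ B = Lmx p r *m Dmx p *m V) /\
    (exists U : 'M[int]_d, inMfrak U /\
       B = Iswap p (ord_last p) *m Mmx p r *m Dmx (ord_last p) *m U) /\
    (exists (Vs : 'I_n0 -> 'M[int]_d) (Us : 'I_m0 -> 'M[int]_d),
       (forall i, inGfrak (Vs i)) /\ (forall i, inGfrak (Us i)) /\
       B = mxprod Vs *m Dmx (ord_last p) *m mxprod Us).
Proof.
move=> detB; have [Q GQ hnfBQ] := hnf_rows_exists B (leqnn d).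
have detBQ : `|\det (B *m Q)| = 2.
  by rewrite det_mulmx normrM detB; case: (Gfrak_prod_det GQ) => ->; rewrite ?normrN normr1 mulr1.
have [p [r [r01 r0 BQE]]] := hnf_det2_LmxDmx hnfBQ detBQ.
have [Q' GQ' QQ'] := Gfrak_prod_inv GQ.
have BE : B = Lmx p r *m Dmx p *m Q' by rewrite -BQE -mulmxA QQ' mulmx1.
have pL : (p <= ord_last p)%N by rewrite /= -ltnS (ltn_predK (ltn_ord p)).
have GP : Gfrak_prod (Iswap p (ord_last p)) by apply: Gfrak_prod_gen; right; right; exists p, (ord_last p).
have GL : Gfrak_prod (Lmx p r) by rewrite LmxE; apply: Gfrak_prod_addcols; rewrite ltnn.
have M_conj : Iswap p (ord_last p) *m Mmx p r *m Iswap p (ord_last p) = Lmx p r.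
  by rewrite MmxE LmxE Iswap_conj_addcols // ?ltnn // -leqNgt.
have [n0 [Vs [GVs VsE]]] := Gfrak_prod_mxprod (Gfrak_prodM GL GP).
have [m0 [Us [GUs UsE]]] := Gfrak_prod_mxprod (Gfrak_prodM GP GQ').
exists p, n0, m0, r; do !split=> //.
- by exists Q'; split=> //; exact: Gfrak_prod_det.
- exists (Iswap p (ord_last p) *m Q'); split; first exact/Gfrak_prod_det/Gfrak_prodM.
  rewrite BE -M_conj -(Iswap_conj_Dmx p (ord_last p)) !mulmxA.
  by rewrite -[_ *m Iswap p _ *m Iswap p _]mulmxA Iswap_invol mulmx1.
- exists Vs, Us; do !split=> //.
  by rewrite -VsE -UsE BE -(Iswap_conj_Dmx p (ord_last p)) !mulmxA.
Qed.
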